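(* Assume the setting and notation described in the context, with $1\le p<s\le d$, $\omega>0$, and with the following nondegeneracy conditions: - $\mathbf A_R(\omega)$ is invertible; - $\mathbf A_V(\omega)$ is invertible if $s<d$; - $a_{s,s}(\omega)\ne0$; - $\mathbf a_R^{\mathrm T}(\omega)\mathbf A_R^{-1}(\omega)\mathbf D_a\neq0$. Let $\vec f_d,\vec f_a\in\mathbb C$ and $\vec{\mathbf x}\in\mathbb C^d$ satisfy $\mathbf A(\omega)\vec{\mathbf x}=\mathbf B_d\vec f_d+\mathbf B_a\vec f_a$ and $\vec x_s=0$, where $\vec f_a$ is an arbitrary absorber force phasor, produced by any absorber and any control law. Then, for every link $i=1,\dots,d+1$, the maximal elastic potential energy $W_{i,\max}=\tfrac12k_i|\vec x_i-\vec x_{i-1}|^2$ (with $\vec x_0=\vec x_{d+1}=0$) is a function only of: - the frequency $\omega$; - the disturbance amplitude $|\vec f_d|$; - the structural parameters $\{m_i: 1\le i\le d,\ i\ne s\}$ and $\{k_i,c_i: 1\le i\le d+1\}$. In particular, these maximal energies do not depend on the parameters (mass, stiffness, damping) of the absorber or on the control law generating $\vec f_a$. Hence they cannot be modified by the absorber design or its control, but only by changing the structural parameters of the chain.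
   Context: A chain of $d\ge 2$ masses $m_1,\dots,m_d>0$ is considered. For $1\le i\le d+1$, link $i$ connects mass $i-1$ and mass $i$ through a spring $k_i>0$ and a damper $c_i\ge0$, where ''mass $0$'' and ''mass $d+1$'' denote the fixed base. - $\mathbf M=\mathrm{diag}(m_1,\dots,m_d)$. - $\mathbf K$ is tridiagonal with $K_{ii}=k_i+k_{i+1}$ and $K_{i,i+1}=K_{i+1,i}=-k_{i+1}$; all other entries are zero. - $\mathbf C$ is defined likewise with the $c_i$. - $\mathbf A(\omega)=-\omega^2\mathbf M+\jmath\omega\mathbf C+\mathbf K$ for a fixed $\omega>0$. Steady-state phasors satisfy $\mathbf A(\omega)\vec{\mathbf x}=\mathbf B_d\vec f_d+\mathbf B_a\vec f_a$, where $\mathbf B_d=\mathbf e_d$ and $\mathbf B_a=\mathbf e_p$ are standard unit vectors of $\mathbb C^d$. Here $\vec f_d$ is the disturbance force phasor acting on $m_d$, and $\vec f_a$ is the total force in the link of an active absorber mounted on $m_p$. With $1\le p<s\le d$, the block decomposition of $\mathbf A(\omega)$ according to indices $\{1,\dots,s-1\}$, $\{s\}$, $\{s+1,\dots,d\}$ is $$\mathbf A=\begin{bmatrix}\mathbf A_R&\mathbf a_R&\mathbf 0\\ \mathbf a_R^{\mathrm T}&a_{s,s}&\mathbf a_V^{\mathrm T}\\ \mathbf 0&\mathbf a_V&\mathbf A_V\end{bmatrix},$$ where: - $\mathbf a_R=(0,\dots,0,-k_s-\jmath\omega c_s)^{\mathrm T}\in\mathbb C^{s-1}$; - $\mathbf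 a_V=(-k_{s+1}-\jmath\omega c_{s+1},0,\dots,0)^{\mathrm T}\in\mathbb C^{d-s}$; - $a_{s,s}=-\omega^2m_s+k_s+k_{s+1}+\jmath\omega(c_s+c_{s+1})$. $\mathbf D_a\in\mathbb R^{s-1}$ is the $p$-th standard unit vector, and $\mathbf D_d\in\mathbb R^{d-s}$ is the last standard unit vector. $W_{i,\max}=\tfrac12k_i|\vec x_i-\vec x_{i-1}|^2$ is the maximum over $t$ of the elastic energy $\tfrac12k_i(x_i(t)-x_{i-1}(t))^2$ in link $i$, where $x_i(t)=\Re(\vec x_ie^{\jmath\omega t})$. *)

From HB Require Import structures.
From mathcomp Require Import all_boot all_order all_algebra.
From mathcomp Require Import complex.
Set Implicit Arguments. Unset Strict Implicit. Unset Printing Implicit Defensive.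
Import Order.TTheory GRing.Theory Num.Theory.
Local Open Scope ring_scope.
Local Open Scope complex_scope.

Section Chain.
Variable R : rcfType.
Local Notation C := R[i].

Definition cmod (z : C) : R := let: a +i* b := z in Num.sqrt (a ^+ 2 + b ^+ 2).

(* Physical indexing: masses m i (1 <= i <= d), links k i, c i (1 <= i <= d+1),
   given as functions nat -> R; matrix row/column r (0-based) is mass r+1. *)
Variables (d : nat) (w : R) (m k c : nat -> R).

Definition Mmx : 'M[C]_d :=
  \matrix_(r, q) (if r == q :> nat then (m r.+1)%:C else 0).
Definition tridiag (l : nat -> R) : 'M[C]_d :=
  \matrix_(r, q)
    (if r == q :> nat then (l r.+1 + l r.+2)%:C
     else if q == r.+1 :> nat then (- l r.+2)%:C
     else if r == q.+1 :> nat then (- l q.+2)%:C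
     else 0).
Definition Kmx : 'M[C]_d := tridiag k.
Definition Cmx : 'M[C]_d := tridiag c.

Definition Amx : 'M[C]_d := - (w ^+ 2)%:C *: Mmx + (w *i) *: Cmx + Kmx.

(* entries of A by 0-based nat indices (0 outside the range) *)
Definition Aent (r q : nat) : C :=
  match (insub r : option 'I_d), (insub q : option 'I_d) with
  | Some r', Some q' => Amx r' q'
  | _, _ => 0
  end.

Variables (p s : nat).
(* blocks for the index sets {1..s-1}, {s}, {s+1..d} *)
Definition A_R : 'M[C]_(s.-1) := \matrix_(r, q) Aent r q.
Definition A_V : 'M[C]_(d - s) := \matrix_(r, q) Aent (s + r) (s + q).
Definition a_R : 'cV[C]_(s.-1) :=
  \col_r (if r == (s.-1).-1 :> nat then - ((k s)%:C + (w * c s) *i) else 0).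
Definition a_ss : C := (- (w ^+ 2 * m s) + k s + k s.+1)%:C + (w * (c s + c s.+1)) *i.
Definition D_a : 'cV[C]_(s.-1) := \col_r (r == p.-1 :> nat)%:R.
Definition D_d : 'cV[C]_(d - s) := \col_r (r == (d - s).-1 :> nat)%:R.
Definition B_d : 'cV[C]_d := \col_r (r == d.-1 :> nat)%:R.
Definition B_a : 'cV[C]_d := \col_r (r == p.-1 :> nat)%:R.

Definition chain_nondeg : Prop :=
  [/\ A_R \in unitmx,
      (s < d)%N -> A_V \in unitmx,
      a_ss != 0 &
      ((a_R^T *m invmx A_R *m D_a) ord0 ord0 != 0)].

(* phasor of mass i (physical index), with x_0 = x_{d+1} = 0 *)
Definition xph (x : 'cV[C]_d) (i : nat) : C :=
  if i is i'.+1 then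
    match (insub i' : option 'I_d) with Some o => x o ord0 | None => 0 end
  else 0.

Definition Wmax (x : 'cV[C]_d) (i : nat) : R :=
  (1 / 2) * k i * (cmod (xph x i - xph x i.-1)) ^+ 2.
End Chain.

From mathcomp Require Import all_boot all_order all_algebra.
From mathcomp Require Import complex zify ring.
Import Order.TTheory GRing.Theory Num.Theory.
Local Open Scope ring_scope.
Set Implicit Arguments.
Unset Strict Implicit.
Unset Printing Implicit Defensive.

(** Since [x_s = 0], column [s] of [A] never acts on a pinned response, so
  the mass [m_s] drops out of the equations.  The
  key fact is that a pinned chain driven only at [p < s] cannot move: the
  rows below [s] form the invertible system [A_V x_V = 0]; the rows above [s]
  give [x_R = f A_R^-1 D_a]; and row [s] itself, [a_R^T x_R = 0], forces
  [f a_R^T A_R^-1 D_a = 0], i.e. [f = 0].  By linearity, two pinned responses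
  whose disturbances have equal modulus differ by a unimodular factor [t]
  ([x' = t x]), which does not change any [|x_i - x_(i-1)|]. *)

Lemma big_ord_nat_supp (V : nmodType) n lo hi (F : nat -> V) :
  (hi <= n)%N -> (forall j, (j < n)%N -> ~~ (lo <= j < hi)%N -> F j = 0) ->
  \sum_(j < n) F j = \sum_(lo <= j < hi) F j.
Proof.
move=> le_hi_n F0; rewrite big_geq_mkord (big_ord_widen_cond _ _ _ le_hi_n).
rewrite [RHS]big_mkcond /=; apply: eq_bigr => j _.
by case: ifP => // /negbT; apply: F0.
Qed.

Lemma cmodE (R : rcfType) (z : R[i]) : cmod z = Normc.normc z.
Proof. by case: z. Qed.

Lemma cmodM (R : rcfType) (y z : R[i]) : cmod (y * z) = cmod y * cmod z.
Proof. by rewrite !cmodE Normc.normcM. Qed.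

Lemma cmod_eq_phase (R : rcfType) (a b : R[i]) :
  cmod a = cmod b -> exists2 t, cmod t = 1 & b = t * a.
Proof.
rewrite !cmodE; have [-> eq_0b|a0 eq_ab] := eqVneq a 0.
  exists 1; first by rewrite cmodE Normc.normc1.
  by rewrite mulr0; apply: Normc.eq0_normc; rewrite -eq_0b Normc.normc0.
exists (b / a); last by rewrite divfK.
have na0 : Normc.normc a != 0 by apply: contra a0 => /eqP/Normc.eq0_normc ->.
by rewrite cmodE Normc.normcM Normc.normcV -eq_ab divff.
Qed.

Section Chain.
Variables (R : rcfType) (d : nat) (w : R) (m k c : nat -> R).
Local Notation A := (Amx d w m k c).
Local Notation Aent := (Aent d w m k c).

Lemma xphZ (t : R[i]) (x : 'cV[R[i]]_d) n : xph (t *: x) n = t * xph x n.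
Proof.
case: n => [|n] /=; first by rewrite mulr0.
by case: insub => [o|]; rewrite ?mxE ?mulr0.
Qed.

Lemma xphB (x y : 'cV[R[i]]_d) n : xph (x - y) n = xph x n - xph y n.
Proof.
case: n => [|n] /=; first by rewrite subr0.
by case: insub => [o|]; rewrite ?mxE ?subr0.
Qed.

Lemma Wmax_scale (t : R[i]) (x : 'cV[R[i]]_d) i :
  cmod t = 1 -> Wmax k (t *: x) i = Wmax k x i.
Proof. by move=> t1; rewrite /Wmax !xphZ -mulrBr cmodM t1 (mul1r (cmod _)). Qed.

Definition cVnth (z : 'cV[R[i]]_d) (j : nat) : R[i] := xph z j.+1.

Lemma cVnth_ord (z : 'cV[R[i]]_d) (j : 'I_d) : cVnth z j = z j ord0.
Proof. by rewrite /cVnth /= valK. Qed.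

Lemma cVnth_out (z : 'cV[R[i]]_d) j : (d <= j)%N -> cVnth z j = 0.
Proof. by move=> le_dj; rewrite /cVnth /= insubF // ltnNge le_dj. Qed.

Lemma Aent_far r q : (r.+2 <= q \/ q.+2 <= r)%N -> Aent r q = 0.
Proof.
rewrite /Aent; case: insubP => [r' _ <-|] //; case: insubP => [q' _ <-|] //= far.
rewrite /Amx /Kmx /Cmx /Mmx /tridiag !mxE.
have [-> -> ->] : [/\ (r' == q' :> nat) = false, (q' == r'.+1 :> nat) = false
                    & (r' == q'.+1 :> nat) = false].
  by split; apply/negbTE/eqP; lia.
by rewrite !(mulr0, addr0).
Qed.

Lemma Amx_mulE (z : 'cV[R[i]]_d) (r : 'I_d) :
  (A *m z) r ord0 = \sum_(j < d) Aent r j * cVnth z j.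
Proof. by rewrite mxE; apply: eq_bigr => j _; rewrite /Aent cVnth_ord !valK. Qed.

Lemma Amx_mass_indep (m' : nat -> R) s (z : 'cV[R[i]]_d) :
  (forall i, i != s -> m' i = m i) -> cVnth z s.-1 = 0 ->
  Amx d w m' k c *m z = A *m z.
Proof.
move=> eq_m z_s; apply/matrixP => r j0; rewrite ord1 !mxE; apply: eq_bigr => j _.
have [js|js] := eqVneq (j : nat) s.-1; first by rewrite -cVnth_ord js z_s !mulr0.
rewrite /Amx /Mmx !mxE; case: eqP => // rj; rewrite eq_m //; apply/eqP; lia.
Qed.

Definition upper_part s (z : 'cV[R[i]]_d) : 'cV[R[i]]_(s.-1) := \col_q cVnth z q.
Definition lower_part s (z : 'cV[R[i]]_d) : 'cV[R[i]]_(d - s) :=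
  \col_q cVnth z (s + q).

Lemma a_R_Aent s (q : 'I_s.-1) : (s <= d)%N -> a_R w k c s q ord0 = Aent s.-1 q.
Proof.
move=> le_sd; rewrite mxE; case: eqP => [qs|qs]; last first.
  by rewrite Aent_far //; have := ltn_ord q; lia.
have s_gt1 : (1 < s)%N by have := ltn_ord q; lia.
rewrite /Aent qs; case: insubP => [r' _ /= Er|]; last first.
  by rewrite (_ : (s.-1 < d)%N) //; lia.
case: insubP => [q' _ /= Eq|]; last by rewrite (_ : (s.-2 < d)%N) //; lia.
rewrite /Amx /Kmx /Cmx /Mmx /tridiag !mxE Er Eq.
have [-> -> ->] : [/\ (s.-1 == s.-2) = false, (s.-2 == s.-1.+1) = false
                    & (s.-1 == s.-2.+1)].
  by split; [apply/negbTE/eqP | apply/negbTE/eqP | apply/eqP]; lia.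
rewrite (_ : s.-2.+2 = s); last by lia.
by apply/eqP; rewrite eq_complex /=; apply/andP; split; apply/eqP; ring.
Qed.

Section PinnedResponse.
Variables (p s : nat) (g : R[i]) (z : 'cV[R[i]]_d).
Hypotheses (p_gt0 : (0 < p)%N) (lt_ps : (p < s)%N) (le_sd : (s <= d)%N).
Hypothesis nondeg : chain_nondeg d w m k c p s.
Hypothesis Az : A *m z = g *: B_a R d p.
Hypothesis z_s : cVnth z s.-1 = 0.

Lemma pinned_row r : (r < d)%N ->
  \sum_(j < d) Aent r j * cVnth z j = g * (r == p.-1)%:R.
Proof.
by move=> lt_rd; move/matrixP: Az => /(_ (Ordinal lt_rd) ord0); rewrite Amx_mulE !mxE.
Qed.

Lemma pinned_lower_block : A_V d w m k c s *m lower_part s z = 0.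
Proof.
apply/matrixP => r j0; rewrite ord1 !mxE.
have lt_srd : (s + r < d)%N by have := ltn_ord r; lia.
have := pinned_row lt_srd.
rewrite (_ : s + r == p.-1 = false); last by apply/negbTE/eqP; lia.
rewrite mulr0 => row0; rewrite -[RHS]row0.
rewrite (big_ord_nat_supp (lo := s) (hi := d)
          (F := fun j => Aent (s + r) j * cVnth z j)) //.
  rewrite (big_addn 0 d s) big_mkord.
  by apply: eq_bigr => q _; rewrite !mxE (addnC q).
move=> j lt_jd out_j; have [->|js] := eqVneq j s.-1; first by rewrite z_s mulr0.
by rewrite Aent_far ?mul0r //; lia.
Qed.

Lemma pinned_lower j : (s.-1 <= j)%N -> cVnth z j = 0.
Proof.
rewrite leq_eqVlt => /orP[/eqP <- //|lt_sj].
have [lt_jd|] := ltnP j d; last exact: cVnth_out.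
case: nondeg => _ unit_AV _ _.
have lt_jsd : (j - s < d - s)%N by lia.
have := mulKmx (unit_AV ltac:(lia)) (lower_part s z).
rewrite pinned_lower_block mulmx0 => /matrixP/(_ (Ordinal lt_jsd) ord0).
by rewrite !mxE /= subnKC //; lia.
Qed.

Lemma pinned_row_upper r :
  \sum_(j < d) Aent r j * cVnth z j = \sum_(q < s.-1) Aent r q * cVnth z q.
Proof.
rewrite (big_ord_nat_supp (lo := 0) (hi := s.-1)
          (F := fun j => Aent r j * cVnth z j)).
- by rewrite big_mkord.
- by lia.
- by move=> j _ out_j; rewrite pinned_lower ?mulr0 //; lia.
Qed.

Lemma pinned_upper_block : A_R d w m k c s *m upper_part s z = g *: D_a R p s.
Proof.
apply/matrixP => r j0; rewrite ord1 !mxE.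
have lt_rd : (r < d)%N by have := ltn_ord r; lia.
by rewrite -pinned_row // pinned_row_upper; apply: eq_bigr => q _; rewrite !mxE.
Qed.

Lemma pinned_interface : ((a_R w k c s)^T *m upper_part s z) ord0 ord0 = 0.
Proof.
rewrite mxE; under eq_bigr do rewrite [_^T _ _]mxE a_R_Aent // [upper_part _ _ _ _]mxE.
rewrite -pinned_row_upper pinned_row; last by lia.
by rewrite (_ : s.-1 == p.-1 = false) ?mulr0 //; apply/negbTE/eqP; lia.
Qed.

Lemma pinned_force_eq0 : g = 0.
Proof.
case: nondeg => unit_AR _ _ nz_gain.
have zR : upper_part s z = g *: (invmx (A_R d w m k c s) *m D_a R p s).
  by rewrite scalemxAr -pinned_upper_block mulKmx.
move: pinned_interface; rewrite zR -scalemxAr mxE mulmxA.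
by move/eqP; rewrite mulf_eq0 (negbTE nz_gain) orbF => /eqP.
Qed.

Lemma pinned_response_eq0 : z = 0.
Proof.
apply/matrixP => i j; rewrite ord1 mxE -cVnth_ord.
have [lt_is|] := ltnP i s.-1; last exact: pinned_lower.
case: nondeg => unit_AR _ _ _.
have := mulKmx unit_AR (upper_part s z).
rewrite pinned_upper_block pinned_force_eq0 scale0r mulmx0.
by move=> /matrixP/(_ (Ordinal lt_is) ord0); rewrite !mxE.
Qed.

End PinnedResponse.

End Chain.

Theorem theorem1 (R : rcfType) (d p s : nat) (w : R) (m m' k c : nat -> R)
    (fd fa fd' fa' : R[i]) (x x' : 'cV[R[i]]_d) :
  (2 <= d)%N -> (1 <= p)%N -> (p < s)%N -> (s <= d)%N -> 0 < w ->
  (forall i, (1 <= i <= d)%N -> 0 < m i) ->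
  (forall i, (1 <= i <= d)%N -> 0 < m' i) ->
  (forall i, (1 <= i <= d.+1)%N -> 0 < k i /\ 0 <= c i) ->
  (forall i, i != s -> m' i = m i) ->
  chain_nondeg d w m k c p s ->
  chain_nondeg d w m' k c p s ->
  Amx d w m k c *m x = fd *: B_d R d + fa *: B_a R d p ->
  xph x s = 0 ->
  Amx d w m' k c *m x' = fd' *: B_d R d + fa' *: B_a R d p ->
  xph x' s = 0 ->
  cmod fd = cmod fd' ->
  forall i, (1 <= i <= d.+1)%N -> Wmax k x i = Wmax k x' i.
Proof.
move=> _ p_gt0 lt_ps le_sd _ _ _ _ eq_m nondeg _ eq_x x_s eq_x' x'_s eq_fd i _.
have s_gt0 : (0 < s)%N by lia.
have x's : cVnth x' s.-1 = 0 by rewrite /cVnth prednK.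
rewrite (Amx_mass_indep w k c eq_m x's) in eq_x'.
have [t t1 fd'E] := cmod_eq_phase eq_fd.
suff : x' - t *: x = 0 by move/subr0_eq ->; rewrite Wmax_scale.
apply: (pinned_response_eq0 (g := fa' - t * fa) p_gt0 lt_ps le_sd nondeg).
  rewrite mulmxBr -scalemxAr eq_x eq_x' fd'E scalerDr !scalerA scalerBl.
  by rewrite opprD addrACA subrr add0r.
by rewrite /cVnth prednK // xphB xphZ x_s x'_s mulr0 subr0.
Qed.
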